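(* For either choice $\zeta\in\{q,-q^{3}\}$ (Fateev–Zamolodchikov or Izergin–Korepin model), the partition function $\mathcal{Z}(\lambda_1,\dots,\lambda_L)=\langle\bar 0|\mathcal{E}(\lambda_L)\cdots\mathcal{E}(\lambda_1)|0\rangle$ is a polynomial in the variables $x_i=e^{2\lambda_i}$ ($1\le i\le L$), symmetric under permutations of $\lambda_1,\dots,\lambda_L$, and of degree $2L-1$ in each variable $x_i$ separately.
   Context: Let $q\in\mathbb{C}\setminus\{0\}$ (with a fixed choice of $q^{1/2}$) and $\zeta\in\{q,-q^3\}$ ($\zeta=q$: Fateev–Zamolodchikov model; $\zeta=-q^3$: Izergin–Korepin model). For $\lambda\in\mathbb{C}$ put $x=e^{2\lambda}$ and define $a(\lambda)=(x-\zeta)(x-q^2)$, $b(\lambda)=q(x-1)(x-\zeta)$, $c(\lambda)=(1-q^2)(x-\zeta)$, $\bar c(\lambda)=x(1-q^2)(x-\zeta)$, and for $\alpha,\beta\in\{1,2,3\}$, with $\beta'=4-\beta$: $d_{\alpha,\beta}(\lambda)=q(x-1)(x-\zeta)+x(q^2-1)(\zeta-1)$ if $\alpha=\beta=2$; $d_{\alpha,\beta}(\lambda)=(x-1)[(x-\zeta)+x(q^2-1)]$ if $\alpha=\beta\neq 2$; $d_{\alpha,\beta}(\lambda)=(q^2-1)[\zeta(x-1)q^{(\alpha-\beta)/2}-\delta_{\alpha,\beta'}(x-\zeta)]$ if $\alpha<\beta$; $d_{\alpha,\beta}(\lambda)=x(q^2-1)[(x-1)q^{(\alpha-\beta)/2}-\delta_{\alpha,\beta'}(x-\zeta)]$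 if $\alpha>\beta$. Let $e_1,e_2,e_3$ be the standard basis of $\mathbb{C}^3$ and $E_{\alpha,\beta}$ the unit matrices. Define $\mathcal{R}(\lambda)\in\mathrm{End}(\mathbb{C}^3\otimes\mathbb{C}^3)$ as the $9\times 9$ matrix in the ordered basis $e_1\otimes e_1,e_1\otimes e_2,e_1\otimes e_3,e_2\otimes e_1,e_2\otimes e_2,e_2\otimes e_3,e_3\otimes e_1,e_3\otimes e_2,e_3\otimes e_3$ (indices $1,\dots,9$) whose only nonzero entries (row, column) are: $(1,1)=a$; $(2,2)=b$, $(2,4)=c$; $(3,3)=d_{1,1}$, $(3,5)=d_{1,2}$, $(3,7)=d_{1,3}$; $(4,2)=\bar c$, $(4,4)=b$; $(5,3)=d_{2,1}$, $(5,5)=d_{2,2}$, $(5,7)=d_{2,3}$; $(6,6)=b$, $(6,8)=c$; $(7,3)=d_{3,1}$, $(7,5)=d_{3,2}$, $(7,7)=d_{3,3}$; $(8,6)=\bar c$, $(8,8)=b$; $(9,9)=a$ (all evaluated at $\lambda$). Fix $L\ge1$ and inhomogeneities $\mu_1,\dots,\mu_L\in\mathbb{C}$. With $V_a=V_1=\dots=V_L=\mathbb{C}^3$, let $\mathcal{T}(\lambda)=\mathcal{R}_{a1}(\lambda-\mu_1)\mathcal{R}_{a2}(\lambda-\mu_2)\cdots\mathcal{R}_{aL}(\lambda-\mu_L)\in\mathrm{End}(V_a\otimes V_1\otimes\cdots\otimes V_L)$, where $\mathcal{R}_{aj}$ acts as $\mathcal{R}$ on $V_a\otimes V_j$. Write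 $\mathcal{T}(\lambda)=\sum_{\alpha,\beta}E_{\alpha,\beta}\otimes\mathcal{T}_\alpha^\beta(\lambda)$ and set $\mathcal{A}(\lambda)=\mathcal{T}_1^1(\lambda)$, $\mathcal{B}(\lambda)=\mathcal{T}_1^2(\lambda)$, $\mathcal{E}(\lambda)=\mathcal{T}_1^3(\lambda)$, operators on $V_1\otimes\cdots\otimes V_L$. Let $|0\rangle=e_1^{\otimes L}$ and let $\langle\bar0|$ be the dual vector of $e_3^{\otimes L}$ (taking the coefficient of $e_3^{\otimes L}$). *)

From HB Require Import structures.
From mathcomp Require Import all_boot all_order all_algebra all_fingroup.
From mathcomp Require Import mpoly.
Set Implicit Arguments.
Unset Strict Implicit.
Unset Printing Implicit Defensive.
Import GRing.Theory Num.Theory.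
Local Open Scope ring_scope.

(* Conventions: a spectral parameter lambda enters only through x = e^{2 lambda};
   an inhomogeneity mu_j enters through w_j = e^{2 mu_j} (nonzero), so that
   R(lambda - mu_j) is R evaluated at x / w_j.  Indices of C^3 are 0,1,2
   (standing for the paper's 1,2,3). *)

Section Model.
Variables (C : fieldType) (q qh zeta : C).
(* qh is the fixed square root q^{1/2} *)

Definition Ra (x : C) : C := (x - zeta) * (x - q ^+ 2).
Definition Rb (x : C) : C := q * (x - 1) * (x - zeta).
Definition Rc (x : C) : C := (1 - q ^+ 2) * (x - zeta).
Definition Rcbar (x : C) : C := x * (1 - q ^+ 2) * (x - zeta).

(* d_{al,be}, with al, be in {1,2,3} as in the paper; q^{(al-be)/2} = qh^(al-be) *)
Definition Rd (al be : nat) (x : C) : C :=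
  if (al == 2)%N && (be == 2)%N then
    q * (x - 1) * (x - zeta) + x * (q ^+ 2 - 1) * (zeta - 1)
  else if al == be then (x - 1) * ((x - zeta) + x * (q ^+ 2 - 1))
  else if (al < be)%N then
    (q ^+ 2 - 1) * (zeta * (x - 1) * qh ^ (al%:Z - be%:Z)
                    - (al == 4 - be)%N%:R * (x - zeta))
  else
    x * (q ^+ 2 - 1) * ((x - 1) * qh ^ (al%:Z - be%:Z)
                        - (al == 4 - be)%N%:R * (x - zeta)).

(* The 9x9 matrix R(lambda), with x = e^{2 lambda}; rows/columns numbered 0..8
   (the paper's 1..9 shifted by one). *)
Definition Rmat (x : C) (r c : nat) : C :=
  match r, c with
  | 0, 0 => Ra x
  | 1, 1 => Rb x | 1, 3 => Rc x
  | 2, 2 => Rd 1 1 x | 2, 4 => Rd 1 2 x | 2, 6 => Rd 1 3 x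
  | 3, 1 => Rcbar x | 3, 3 => Rb x
  | 4, 2 => Rd 2 1 x | 4, 4 => Rd 2 2 x | 4, 6 => Rd 2 3 x
  | 5, 5 => Rb x | 5, 7 => Rc x
  | 6, 2 => Rd 3 1 x | 6, 4 => Rd 3 2 x | 6, 6 => Rd 3 3 x
  | 7, 5 => Rcbar x | 7, 7 => Rb x
  | 8, 8 => Ra x
  | _, _ => 0
  end.

(* <e_a (x) e_i | R(x) | e_b (x) e_j> *)
Definition Rent (x : C) (a i b j : 'I_3) : C := Rmat x (3 * a + i) (3 * b + j).

(* Basis states of V_1 (x) ... (x) V_L, and operators as matrices on them *)
Definition state (L : nat) := {ffun 'I_L -> 'I_3}.
Definition op (L : nat) := state L -> state L -> C.
Definition opmul L (A B : op L) : op L := fun s t => \sum_(u : state L) A s u * B u t.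
Definition opid L : op L := fun s t => (s == t)%:R.

(* Entry T_al^be(lambda) of the monodromy matrix
   T(lambda) = R_{a1}(lambda-mu_1) ... R_{aL}(lambda-mu_L), as an operator on
   the quantum space: sum over auxiliary paths al = g_0, g_1, ..., g_L = be. *)
Definition Tent L (w : 'I_L -> C) (x : C) (al be : 'I_3) : op L :=
  fun s t =>
    \sum_(g : {ffun 'I_L.+1 -> 'I_3} | (g ord0 == al) && (g ord_max == be))
      \prod_(j < L) Rent (x / w j) (g (inord j)) (s j) (g (inord j.+1)) (t j).

Definition Eop L (w : 'I_L -> C) (x : C) : op L := Tent w x (inord 0) (inord 2).

Definition vac L : state L := [ffun _ => inord 0].
Definition dvac L : state L := [ffun _ => inord 2].

(* Z = <0bar| E(lambda_L) ... E(lambda_1) |0>, as a function of x_i = e^{2 lambda_i}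
   (x : 'I_L -> C, x i standing for x_{i+1}) *)
Definition PF L (w : 'I_L -> C) (x : 'I_L -> C) : C :=
  (\big[@opmul L/@opid L]_(i < L) Eop w (x (rev_ord i))) (dvac L) (vac L).

End Model.

From HB Require Import structures.
From mathcomp Require Import all_boot all_order all_algebra all_fingroup.
From mathcomp Require Import mpoly ring zify.
From Stdlib Require Import FunctionalExtensionality.
Import GRing.Theory Num.Theory.
Local Open Scope ring_scope.
Set Implicit Arguments.
Unset Strict Implicit.
Unset Printing Implicit Defensive.

(* E(x) is the (e_1, e_3) entry, on the auxiliary space, of the product over
   the sites j of the local operators L_j(x) made of the entries of R(x/w_j).
   For both values of zeta, R satisfies the Yang-Baxter equation; equivalently
   R(x/y) intertwines L_j(x) ⊗ L_j(y) with L_j(y) ⊗ L_j(x), hence also the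
   products over all sites.  The row of R through e_1 ⊗ e_1 and its column
   through e_3 ⊗ e_3 have the single nonzero entry a, so the
   (e_1 ⊗ e_1, e_3 ⊗ e_3) entry of this intertwining reads
   a(x/y) [E(x), E(y)] = 0.  Both factors are polynomials in x and the first
   one is nonzero, so E(x) and E(y) commute and Z is symmetric.
   Every entry of R(x) has degree at most 2 in x, so Z has degree at most 2L in
   each x_i.  The x^(2L)-coefficient of E(x) is the (e_1, e_3) entry of the
   product of the x^2-coefficients of the L_j, which are lower triangular since
   the entries of R above its diagonal 3 x 3 blocks are affine in x; so it
   vanishes. *)

Section FunMatrix.
Variables (R : comPzRingType) (S : finType).

Definition fmx := S -> S -> R.
Definition fmx_mul (A B : fmx) : fmx := fun a b => \sum_c A a c * B c b.
Definition fmx1 : fmx := fun a b => (a == b)%:R.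
Definition fmx0 : fmx := fun _ _ => 0.
Definition fmx_scale (c : R) (A : fmx) : fmx := fun a b => c * A a b.
Definition fmx_sum (I : finType) (A : I -> fmx) : fmx := fun a b => \sum_i A i a b.
Definition fmx_prod n (A : 'I_n -> fmx) : fmx := \big[fmx_mul/fmx1]_(i < n) A i.

Lemma fmxP (A B : fmx) : (forall a b, A a b = B a b) -> A = B.
Proof.
by move=> eqAB; do 2![apply: functional_extensionality => ?]; apply: eqAB.
Qed.

Lemma fmx_mulA : associative fmx_mul.
Proof.
move=> A B D; apply: fmxP => a b; rewrite /fmx_mul.
under eq_bigr do rewrite mulr_sumr.
rewrite exchange_big; apply: eq_bigr => d _.
by rewrite mulr_suml; apply: eq_bigr => c _; rewrite mulrA.
Qed.

Lemma fmx_mul1l : left_id fmx1 fmx_mul.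
Proof.
move=> A; apply: fmxP => a b; rewrite /fmx_mul /fmx1 (bigD1 a) //= eqxx mul1r.
by rewrite big1 ?addr0 // => c /negbTE; rewrite eq_sym => ->; rewrite mul0r.
Qed.

Lemma fmx_mul1r : right_id fmx1 fmx_mul.
Proof.
move=> A; apply: fmxP => a b; rewrite /fmx_mul /fmx1 (bigD1 b) //= eqxx mulr1.
by rewrite big1 ?addr0 // => c /negbTE ->; rewrite mulr0.
Qed.

Lemma fmx_mul0l : left_zero fmx0 fmx_mul.
Proof. by move=> A; apply: fmxP => a b; rewrite /fmx_mul big1 // => c _; rewrite mul0r. Qed.

Lemma fmx_mul0r : right_zero fmx0 fmx_mul.
Proof. by move=> A; apply: fmxP => a b; rewrite /fmx_mul big1 // => c _; rewrite mulr0. Qed.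

Lemma fmx_mul_suml (I : finType) (A : I -> fmx) B :
  fmx_mul (fmx_sum A) B = fmx_sum (fun i => fmx_mul (A i) B).
Proof.
apply: fmxP => a b; rewrite /fmx_mul /fmx_sum.
by under eq_bigr do rewrite mulr_suml; rewrite exchange_big.
Qed.

Lemma fmx_mul_sumr (I : finType) A (B : I -> fmx) :
  fmx_mul A (fmx_sum B) = fmx_sum (fun i => fmx_mul A (B i)).
Proof.
apply: fmxP => a b; rewrite /fmx_mul /fmx_sum.
by under eq_bigr do rewrite mulr_sumr; rewrite exchange_big.
Qed.

Lemma fmx_mul_scalel c A B : fmx_mul (fmx_scale c A) B = fmx_scale c (fmx_mul A B).
Proof.
apply: fmxP => a b; rewrite /fmx_mul /fmx_scale mulr_sumr.
by apply: eq_bigr => d _; rewrite mulrA.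
Qed.

Lemma fmx_mul_scaler c A B : fmx_mul A (fmx_scale c B) = fmx_scale c (fmx_mul A B).
Proof.
apply: fmxP => a b; rewrite /fmx_mul /fmx_scale mulr_sumr.
by apply: eq_bigr => d _; rewrite mulrCA.
Qed.

Lemma fmx_prod0 (A : 'I_0 -> fmx) : fmx_prod A = fmx1.
Proof. exact: big_ord0. Qed.

Lemma fmx_prodS n (A : 'I_n.+1 -> fmx) :
  fmx_prod A = fmx_mul (A ord0) (fmx_prod (fun i => A (lift ord0 i))).
Proof. exact: big_ord_recl. Qed.

Lemma fmx_prod_scale n (c : 'I_n -> R) (A : 'I_n -> fmx) :
  fmx_prod (fun i => fmx_scale (c i) (A i)) = fmx_scale (\prod_i c i) (fmx_prod A).
Proof.
elim: n c A => [|n IHn] c A.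
  by rewrite !fmx_prod0 big_ord0; apply: fmxP => a b; rewrite /fmx_scale mul1r.
rewrite !fmx_prodS IHn fmx_mul_scalel fmx_mul_scaler big_ord_recl.
by apply: fmxP => a b; rewrite /fmx_scale mulrA.
Qed.

Lemma fmx_prod_eq0 n (A : 'I_n -> fmx) i : A i = fmx0 -> fmx_prod A = fmx0.
Proof.
elim: n A i => [|n IHn] A i; first by case: i.
rewrite fmx_prodS; case: (unliftP ord0 i) => [j|] -> Ai0.
  by rewrite (IHn _ j Ai0) fmx_mul0r.
by rewrite Ai0 fmx_mul0l.
Qed.

Lemma fmx_prod_intertwine n (B : fmx) (A A' : 'I_n -> fmx) :
  (forall i, fmx_mul B (A i) = fmx_mul (A' i) B) ->
  fmx_mul B (fmx_prod A) = fmx_mul (fmx_prod A') B.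
Proof.
elim: n A A' => [|n IHn] A A' BA; first by rewrite !fmx_prod0 fmx_mul1r fmx_mul1l.
by rewrite !fmx_prodS fmx_mulA BA -!fmx_mulA (IHn _ (fun i => A' (lift ord0 i))).
Qed.

End FunMatrix.

Arguments fmx1 {R S}.
Arguments fmx0 {R S}.

Section FfunSums.
Variables (V : nmodType) (K : finType).

Definition ffun_cons n (k : K) (g : {ffun 'I_n -> K}) : {ffun 'I_n.+1 -> K} :=
  [ffun i => if unlift ord0 i is Some j then g j else k].

Lemma ffun_cons0 n k (g : {ffun 'I_n -> K}) : ffun_cons k g ord0 = k.
Proof. by rewrite ffunE unlift_none. Qed.

Lemma ffun_consS n k (g : {ffun 'I_n -> K}) j : ffun_cons k g (lift ord0 j) = g j.
Proof. by rewrite ffunE liftK. Qed.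

Lemma sum_ffun0 (F : {ffun 'I_0 -> K} -> V) : \sum_f F f = F (ffun0 (card_ord 0)).
Proof.
rewrite (big_pred1 (ffun0 (card_ord 0))) // => f /=.
by symmetry; apply/eqP/ffunP => -[].
Qed.

Lemma sum_ffunS n (F : {ffun 'I_n.+1 -> K} -> V) :
  \sum_f F f = \sum_(k : K) \sum_(g : {ffun 'I_n -> K}) F (ffun_cons k g).
Proof.
rewrite pair_big /= (reindex (fun p : K * {ffun 'I_n -> K} => ffun_cons p.1 p.2)) //=.
exists (fun f : {ffun 'I_n.+1 -> K} => (f ord0, [ffun j => f (lift ord0 j)])).
  move=> [k g] _ /=; rewrite ffun_cons0; congr (_, _).
  by apply/ffunP => j; rewrite ffunE ffun_consS.
move=> f _; apply/ffunP => i; rewrite ffunE.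
by case: (unliftP ord0 i) => [j|] ->; rewrite ?ffunE.
Qed.

End FfunSums.

Lemma sum_pair (V : nmodType) (I J : finType) (F : I * J -> V) :
  \sum_p F p = \sum_i \sum_j F (i, j).
Proof. by rewrite pair_bigA; apply: eq_bigr => -[]. Qed.

Lemma sum3E (V : nmodType) (F : 'I_3 -> V) :
  \sum_(i < 3) F i = F (@Ordinal 3 0 isT) + F (@Ordinal 3 1 isT) + F (@Ordinal 3 2 isT).
Proof.
by rewrite !big_ord_recr big_ord0 /= add0r; congr (F _ + F _ + F _); apply: val_inj.
Qed.

Lemma inordS n i : (i < n.+1)%N -> (inord i.+1 : 'I_n.+2) = lift ord0 (inord i).
Proof. by move=> lt_i_n; apply: val_inj; rewrite /= /bump /= !inordK. Qed.

Lemma inord0 n : (inord 0 : 'I_n.+1) = ord0.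
Proof. by apply: val_inj; rewrite /= inordK. Qed.

Section FunMatrixProducts.
Variables (R : comPzRingType) (S : finType).

Lemma fmx_prod_sum (I : finType) n (A : 'I_n -> I -> fmx R S) :
  fmx_prod (fun j => fmx_sum (A j)) =
  fmx_sum (fun f : {ffun 'I_n -> I} => fmx_prod (fun j => A j (f j))).
Proof.
elim: n A => [|n IHn] A.
  by rewrite fmx_prod0; apply: fmxP => a b; rewrite /fmx_sum sum_ffun0 fmx_prod0.
rewrite fmx_prodS IHn fmx_mul_suml; apply: fmxP => a b.
rewrite /fmx_sum sum_ffunS; apply: eq_bigr => k _.
rewrite fmx_mul_sumr /fmx_sum; apply: eq_bigr => g _.
rewrite fmx_prodS ffun_cons0; congr (fmx_mul _ (fmx_prod _) a b).
by apply: functional_extensionality => j; rewrite ffun_consS.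
Qed.

Lemma fmx_prod_path n (A : 'I_n -> fmx R S) a b :
  \sum_(g : {ffun 'I_n.+1 -> S} | (g ord0 == a) && (g ord_max == b))
     \prod_(j < n) A j (g (inord j)) (g (inord j.+1)) = fmx_prod A a b.
Proof.
elim: n A a b => [|n IHn] A a b.
  rewrite fmx_prod0 /fmx1 big_mkcond sum_ffunS.
  have -> : (ord_max : 'I_1) = ord0 by apply: val_inj.
  under eq_bigr do rewrite sum_ffun0 ffun_cons0 big_ord0.
  rewrite (bigD1 a) //= eqxx big1 ?addr0; first by case: (a == b).
  by move=> k /negbTE ->.
have ord_maxS : (ord_max : 'I_n.+2) = lift ord0 ord_max by apply: val_inj.
rewrite big_mkcond sum_ffunS ord_maxS (bigD1 a) //= [X in _ + X]big1 ?addr0; last first.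
  by move=> k /negbTE ne_ka; apply: big1 => g _; rewrite ffun_cons0 ne_ka.
rewrite fmx_prodS /fmx_mul.
under [RHS]eq_bigr => d _ do rewrite -IHn big_distrr big_mkcond.
rewrite exchange_big /=; apply: eq_bigr => g _.
rewrite (bigD1 (g ord0)) //= [X in _ + X]big1 ?addr0; last first.
  by move=> d /negbTE; rewrite eq_sym => ->.
rewrite ffun_cons0 ffun_consS eqxx /= big_ord_recl inord0 ffun_cons0.
rewrite (inordS (ltn0Sn n)) ffun_consS inord0 eqxx.
case: (g ord_max == b); rewrite ?mulr0 //=; congr (_ * _).
apply: eq_bigr => j _.
by rewrite (inordS (leqW (ltn_ord j))) (inordS (ltn_ord j : (j.+1 < n.+1)%N)) !ffun_consS.
Qed.

End FunMatrixProducts.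

Section Tensor.
Variables (R : comPzRingType) (S1 S2 : finType).

Definition fmx_tens (A : fmx R S1) (B : fmx R S2) : fmx R (S1 * S2)%type :=
  fun p r => A p.1 r.1 * B p.2 r.2.

Lemma fmx_tens_mul A B A' B' :
  fmx_mul (fmx_tens A B) (fmx_tens A' B') = fmx_tens (fmx_mul A A') (fmx_mul B B').
Proof.
apply: fmxP => p r; rewrite /fmx_mul /fmx_tens mulr_suml.
under [RHS]eq_bigr do rewrite mulr_sumr.
by rewrite pair_bigA; apply: eq_bigr => -[i j] _ /=; rewrite mulrACA.
Qed.

Lemma fmx_tens1 : fmx_tens (@fmx1 R S1) (@fmx1 R S2) = fmx1.
Proof.
apply: fmxP => -[a1 a2] [b1 b2]; rewrite /fmx_tens /fmx1 /= xpair_eqE.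
by case: (a1 == b1); case: (a2 == b2); rewrite /= ?mul1r ?mul0r.
Qed.

Lemma fmx_tens_prod n (A : 'I_n -> fmx R S1) (B : 'I_n -> fmx R S2) :
  fmx_tens (fmx_prod A) (fmx_prod B) = fmx_prod (fun i => fmx_tens (A i) (B i)).
Proof.
elim: n A B => [|n IHn] A B; first by rewrite !fmx_prod0 fmx_tens1.
by rewrite !fmx_prodS -IHn fmx_tens_mul.
Qed.

End Tensor.

Section LowerTriangular.
Variables (R : comPzRingType) (k : nat).

Definition fmx_lower (A : fmx R 'I_k) := forall a b : 'I_k, (a < b)%N -> A a b = 0.

Lemma fmx_lower_mul A B : fmx_lower A -> fmx_lower B -> fmx_lower (fmx_mul A B).
Proof.
move=> lowA lowB a b lt_ab; rewrite /fmx_mul big1 // => c _.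
case: (ltnP a c) => [lt_ac|le_ca]; first by rewrite lowA // mul0r.
by rewrite lowB ?mulr0 // (leq_ltn_trans le_ca lt_ab).
Qed.

Lemma fmx_lower_prod n (A : 'I_n -> fmx R 'I_k) :
  (forall i, fmx_lower (A i)) -> fmx_lower (fmx_prod A).
Proof.
elim: n A => [|n IHn] A lowA.
  by rewrite fmx_prod0 => a b /ltn_eqF; rewrite /fmx1 -val_eqE => ->.
by rewrite fmx_prodS; apply: fmx_lower_mul => //; apply: IHn.
Qed.

End LowerTriangular.

Section CommutingBigop.
Variables (T : Type) (op : T -> T -> T) (idx : T) (I : eqType) (F : I -> T).
Hypotheses (opA : associative op) (opF : forall i j, op (F i) (F j) = op (F j) (F i)).

Lemma big_rem_comm r a : a \in r ->
  \big[op/idx]_(i <- r) F i = op (F a) (\big[op/idx]_(i <- rem a r) F i).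
Proof.
elim: r => [//|b r IHr]; rewrite inE big_cons /=.
have [-> //|ne_ba /= ar] := eqVneq b a.
by rewrite big_cons (IHr ar) opA opF -opA.
Qed.

Lemma perm_big_comm r1 r2 : perm_eq r1 r2 ->
  \big[op/idx]_(i <- r1) F i = \big[op/idx]_(i <- r2) F i.
Proof.
elim: r1 r2 => [|a r1 IHr1] r2 eq_r12; first by case: r2 eq_r12 => // b r2 /perm_size.
have ar2 : a \in r2 by rewrite -(perm_mem eq_r12) mem_head.
rewrite big_cons (big_rem_comm ar2) (IHr1 (rem a r2)) //.
by rewrite -(perm_cons a) (perm_trans eq_r12) ?perm_to_rem.
Qed.

End CommutingBigop.

Lemma perm_map_index_enum (T : finType) (f : T -> T) :
  injective f -> perm_eq [seq f i | i <- index_enum T] (index_enum T).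
Proof.
move=> f_inj; apply: uniq_perm; rewrite ?map_inj_uniq ?index_enum_uniq // => y.
rewrite mem_index_enum; apply/mapP; exists (invF f_inj y); rewrite ?mem_index_enum //.
by rewrite f_invF.
Qed.

Lemma expfzB (F : fieldType) (x : F) (a b : nat) :
  x != 0 -> x ^ (a%:Z - b%:Z) = x ^+ a / x ^+ b.
Proof. by move=> x0; rewrite expfzDr // -invr_expz. Qed.

Lemma natr_inj_pchar0 (R : idomainType) :
  [pchar R] =i pred0 -> injective (fun n : nat => n%:R : R).
Proof.
move=> /(iffLR (pcharf0P R)) natr_eq0.
suff le_inj m n : (m <= n)%N -> m%:R = n%:R :> R -> m = n.
  move=> m n eq_mn; case/orP: (leq_total m n) => [le_mn | le_nm]; first exact: le_inj.
  by apply/esym/le_inj.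
move=> le_mn /esym/eqP; rewrite -subr_eq0 -natrB // natr_eq0 subn_eq0 => le_nm.
by apply/eqP; rewrite eqn_leq le_mn.
Qed.

Lemma poly_eq0_horner (R : idomainType) (p : {poly R}) :
  [pchar R] =i pred0 -> (forall x, p.[x] = 0) -> p = 0.
Proof.
move=> charR0 p0.
apply: (@roots_geq_poly_eq0 _ _ [seq n%:R | n <- iota 0 (size p)]).
- by apply/allP => x _; rewrite /root p0.
- by rewrite map_inj_uniq ?iota_uniq //; apply: natr_inj_pchar0.
- by rewrite size_map size_iota.
Qed.

Section RMatrixOperators.
Variables (R : comPzRingType) (Rt : R -> nat -> nat -> R).

Definition Rmx (z : R) : fmx R ('I_3 * 'I_3)%type :=
  fun p r => Rt z (3 * p.1 + p.2)%N (3 * r.1 + r.2)%N.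

Definition Lax (z : R) (i k : 'I_3) : fmx R 'I_3 :=
  fun a b => Rt z (3 * a + i)%N (3 * b + k)%N.

End RMatrixOperators.

(* Structural zeros of R are represented by [None], so that evaluation discards
   them from the entrywise Yang-Baxter equation before [ring] is called. *)
Section SparseArithmetic.
Variable R : comNzRingType.

Definition oadd (a b : option R) : option R :=
  match a, b with
  | Some x, Some y => Some (x + y)
  | None, _ => b
  | _, None => a
  end.

Definition omul (a b : option R) : option R :=
  match a, b with Some x, Some y => Some (x * y) | _, _ => None end.

Definition oval (a : option R) : R := if a is Some x then x else 0.

Definition osum3 (F : nat -> option R) : option R := oadd (oadd (F 0%N) (F 1%N)) (F 2%N).

Lemma oval_add a b : oval (oadd a b) = oval a + oval b.
Proof. by case: a; case: b => /= *; rewrite ?addr0 ?add0r. Qed.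

Lemma oval_mul a b : oval (omul a b) = oval a * oval b.
Proof. by case: a; case: b => /= *; rewrite ?mulr0 ?mul0r. Qed.

End SparseArithmetic.

(* [p] stands for q^(1/2) and [u] for zeta / q, so that zeta q^(-1/2) = u p and
   zeta q^(-1) = u: every entry of R becomes a polynomial. *)
Section PolynomialRMatrix.
Variables (R : comNzRingType) (p u : R).
Local Notation q := (p ^+ 2).
Local Notation zeta := (u * q).

Definition Rsparse (x : R) (r c : nat) : option R :=
  match r, c with
  | 0, 0 => Some ((x - zeta) * (x - q ^+ 2))
  | 1, 1 => Some (q * (x - 1) * (x - zeta))
  | 1, 3 => Some ((1 - q ^+ 2) * (x - zeta))
  | 2, 2 => Some ((x - 1) * ((x - zeta) + x * (q ^+ 2 - 1)))
  | 2, 4 => Some ((q ^+ 2 - 1) * (u * p * (x - 1)))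
  | 2, 6 => Some ((q ^+ 2 - 1) * (u * (x - 1) - (x - zeta)))
  | 3, 1 => Some (x * (1 - q ^+ 2) * (x - zeta))
  | 3, 3 => Some (q * (x - 1) * (x - zeta))
  | 4, 2 => Some (x * (q ^+ 2 - 1) * ((x - 1) * p))
  | 4, 4 => Some (q * (x - 1) * (x - zeta) + x * (q ^+ 2 - 1) * (zeta - 1))
  | 4, 6 => Some ((q ^+ 2 - 1) * (u * p * (x - 1)))
  | 5, 5 => Some (q * (x - 1) * (x - zeta))
  | 5, 7 => Some ((1 - q ^+ 2) * (x - zeta))
  | 6, 2 => Some (x * (q ^+ 2 - 1) * ((x - 1) * q - (x - zeta)))
  | 6, 4 => Some (x * (q ^+ 2 - 1) * ((x - 1) * p))
  | 6, 6 => Some ((x - 1) * ((x - zeta) + x * (q ^+ 2 - 1)))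
  | 7, 5 => Some (x * (1 - q ^+ 2) * (x - zeta))
  | 7, 7 => Some (q * (x - 1) * (x - zeta))
  | 8, 8 => Some ((x - zeta) * (x - q ^+ 2))
  | _, _ => None
  end.

Definition Rpoly (x : R) (r c : nat) : R := oval (Rsparse x r c).

End PolynomialRMatrix.

(* R12(z) R13(zv) R23(v) = R23(v) R13(zv) R12(z), entry ((c,d,i), (e,f,k)). *)
Lemma Rsparse_ybe (R : comNzRingType) (p u z v : R) (i k c d e f : nat) :
  u = 1 \/ u = - p ^+ 4 ->
  (i < 3)%N -> (k < 3)%N -> (c < 3)%N -> (d < 3)%N -> (e < 3)%N -> (f < 3)%N ->
  let Rs := Rsparse p u in
  oval (osum3 (fun c1 => osum3 (fun d1 =>
    omul (Rs z (3 * c + d)%N (3 * c1 + d1)%N)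
      (osum3 (fun m => omul (Rs (z * v) (3 * c1 + i)%N (3 * e + m)%N)
                            (Rs v (3 * d1 + m)%N (3 * f + k)%N))))))
  = oval (osum3 (fun e1 => osum3 (fun f1 =>
    omul (osum3 (fun m => omul (Rs (z * v) (3 * c + m)%N (3 * e1 + k)%N)
                               (Rs v (3 * d + i)%N (3 * f1 + m)%N)))
      (Rs z (3 * e1 + f1)%N (3 * e + f)%N)))).
Proof.
(* The case splits are nested so that each instance is closed before the next
   one is generated, which keeps memory use low. *)
case=> ->;
case: i => [|[|[|//]]] _; (case: k => [|[|[|//]]] _;
(case: c => [|[|[|//]]] _; (case: d => [|[|[|//]]] _;
(case: e => [|[|[|//]]] _; (case: f => [|[|[|//]]] _;
  cbv beta iota zeta delta
    [oval osum3 omul oadd Rsparse muln addn Init.Nat.mul Init.Nat.add];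
  match goal with |- ?a = ?a => reflexivity | _ => ring end))))).
Qed.

Lemma Rpoly_RLL (R : comNzRingType) (p u z v : R) (i k : 'I_3) :
  u = 1 \/ u = - p ^+ 4 ->
  fmx_mul (Rmx (Rpoly p u) z)
    (fmx_sum (fun e => fmx_tens (Lax (Rpoly p u) (z * v) i e) (Lax (Rpoly p u) v e k)))
  = fmx_mul
    (fmx_sum (fun e => fmx_tens (Lax (Rpoly p u) (z * v) e k) (Lax (Rpoly p u) v i e)))
    (Rmx (Rpoly p u) z).
Proof.
move=> hu; apply: fmxP => -[c d] [e f].
have := Rsparse_ybe z v hu (ltn_ord i) (ltn_ord k) (ltn_ord c) (ltn_ord d)
  (ltn_ord e) (ltn_ord f).
rewrite /osum3 !(oval_add, oval_mul) => ybe.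
rewrite /fmx_mul /fmx_sum /fmx_tens /Rmx /Lax !sum_pair !sum3E /=.
exact: ybe.
Qed.

Section QuadraticCoefficients.
Variables (C : fieldType) (p u : C).
Hypothesis two_neq0 : (2%:R : C) != 0.

Definition quad_coef (f : C -> C) (e : nat) : C :=
  match e with
  | 0 => f 0
  | 1 => (f 1 - f (-1)) / 2%:R
  | _ => (f 1 + f (-1)) / 2%:R - f 0
  end.

Definition Lcoef (e : nat) (i k : 'I_3) : fmx C 'I_3 :=
  fun a b => quad_coef (fun x => Rpoly p u x (3 * a + i)%N (3 * b + k)%N) e.

Lemma Lax_Rpoly_expand x i k :
  Lax (Rpoly p u) x i k = fmx_sum (fun e : 'I_3 => fmx_scale (x ^+ e) (Lcoef e i k)).
Proof.
apply: fmxP => a b; rewrite /fmx_sum /fmx_scale sum3E /Lcoef /Lax /quad_coef /=.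
case: a => -[|[|[|//]]] ?; case: b => -[|[|[|//]]] ?;
case: i => -[|[|[|//]]] ?; case: k => -[|[|[|//]]] ?;
rewrite /Rpoly /=; field; exact: two_neq0.
Qed.

Lemma Lcoef2_lower i k : fmx_lower (Lcoef 2 i k).
Proof.
move=> a b; rewrite /Lcoef /quad_coef.
case: a => -[|[|[|//]]] ?; case: b => -[|[|[|//]]] ? //= _;
case: i => -[|[|[|//]]] ?; case: k => -[|[|[|//]]] ?;
rewrite /Rpoly /=; field; exact: two_neq0.
Qed.

End QuadraticCoefficients.

Section Model.
Variables (C : fieldType) (q qh zeta : C).
Hypothesis C_char0 : [pchar C] =i pred0.
Hypotheses (qh_neq0 : qh != 0) (qhq : qh ^+ 2 = q).
Hypothesis zeta_cases : zeta = q \/ zeta = - q ^+ 3.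
Local Notation Rt := (Rmat q qh zeta).
Local Notation u := (zeta / q).

Lemma Rmat_Rpoly : Rt = Rpoly qh u.
Proof.
apply: functional_extensionality => x; apply: functional_extensionality => r.
apply: functional_extensionality => c.
case: r => [|[|[|[|[|[|[|[|[|r]]]]]]]]]; case: c => [|[|[|[|[|[|[|[|[|c]]]]]]]]];
rewrite /Rmat /Rpoly /Rd ?expfzB //= /Ra /Rb /Rc /Rcbar -qhq; by field.
Qed.

Lemma zeta_div_q_cases : u = 1 \/ u = - qh ^+ 4.
Proof.
have q_neq0 : q != 0 by rewrite -qhq; apply: expf_neq0.
case: zeta_cases => ->; [left; exact: divff | right].
by rewrite -qhq; field.
Qed.

Lemma Rmat_RLL z v i k :
  fmx_mul (Rmx Rt z) (fmx_sum (fun e => fmx_tens (Lax Rt (z * v) i e) (Lax Rt v e k))) =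
  fmx_mul (fmx_sum (fun e => fmx_tens (Lax Rt (z * v) e k) (Lax Rt v i e))) (Rmx Rt z).
Proof. by rewrite Rmat_Rpoly; apply: Rpoly_RLL zeta_div_q_cases. Qed.

Lemma Rmx_first_row z (M : fmx C ('I_3 * 'I_3)%type) b :
  fmx_mul (Rmx Rt z) M (ord0, ord0) b = Ra q zeta z * M (ord0, ord0) b.
Proof.
rewrite /fmx_mul (bigD1 (ord0, ord0)) //= big1 ?addr0 // => -[c d] /=.
rewrite xpair_eqE -!val_eqE /= /Rmx /=.
by case: (nat_of_ord c) => [|c'] //; case: (nat_of_ord d) => [|d'] //; rewrite mul0r.
Qed.

Lemma Rmx_last_col z (M : fmx C ('I_3 * 'I_3)%type) a :
  fmx_mul M (Rmx Rt z) a (ord_max, ord_max) = M a (ord_max, ord_max) * Ra q zeta z.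
Proof.
rewrite /fmx_mul (bigD1 (ord_max, ord_max)) //= big1 ?addr0 // => -[c d] /=.
rewrite xpair_eqE -!val_eqE /= /Rmx /=.
case: c d => -[|[|[|//]]] ? [[|[|[|//]]] ?] //=; by rewrite mulr0.
Qed.

Variables (L : nat) (w : 'I_L -> C).
Local Notation E := (Eop q qh zeta w).

Lemma Eop_prod x s t :
  E x s t = fmx_prod (fun j => Lax Rt (x / w j) (s j) (t j)) ord0 ord_max.
Proof.
rewrite /Eop /Tent inord0.
have -> : (inord 2 : 'I_3) = ord_max by apply: val_inj; rewrite /= inordK.
by rewrite -fmx_prod_path.
Qed.

Lemma Eop_mul x y s t :
  fmx_mul (E x) (E y) s t =
  fmx_prod (fun j => fmx_sum (fun v =>
    fmx_tens (Lax Rt (x / w j) (s j) v) (Lax Rt (y / w j) v (t j))))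
    (ord0, ord0) (ord_max, ord_max).
Proof.
rewrite fmx_prod_sum /fmx_mul /fmx_sum; apply: eq_bigr => r _.
by rewrite !Eop_prod -fmx_tens_prod.
Qed.

Lemma Eop_mul_rev x y s t :
  fmx_mul (E y) (E x) s t =
  fmx_prod (fun j => fmx_sum (fun v =>
    fmx_tens (Lax Rt (x / w j) v (t j)) (Lax Rt (y / w j) (s j) v)))
    (ord0, ord0) (ord_max, ord_max).
Proof.
rewrite fmx_prod_sum /fmx_mul /fmx_sum; apply: eq_bigr => r _.
by rewrite !Eop_prod -fmx_tens_prod /fmx_tens /= mulrC.
Qed.

Lemma Ra_Eop_comm x y s t : y != 0 ->
  Ra q zeta (x / y) * fmx_mul (E x) (E y) s t = fmx_mul (E y) (E x) s t * Ra q zeta (x / y).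
Proof.
move=> y_neq0; rewrite Eop_mul Eop_mul_rev -Rmx_first_row -Rmx_last_col.
have split_x j : x / w j = x / y * (y / w j) by rewrite mulrA divfK.
congr (_ _ _); apply: fmx_prod_intertwine => j.
by rewrite split_x; apply: Rmat_RLL.
Qed.

Lemma two_neq0 : (2%:R : C) != 0.
Proof. by rewrite (iffLR (pcharf0P C)). Qed.

Lemma Lax_Rmat_expand x i k :
  Lax Rt x i k = fmx_sum (fun e : 'I_3 => fmx_scale (x ^+ e) (Lcoef qh u e i k)).
Proof. by rewrite Rmat_Rpoly Lax_Rpoly_expand // two_neq0. Qed.

Definition Edeg (f : {ffun 'I_L -> 'I_3}) : nat := (\sum_j f j)%N.

Definition Ecoef (f : {ffun 'I_L -> 'I_3}) : fmx C (state L) := fun s t =>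
  (\prod_j (w j)^-1 ^+ f j) * fmx_prod (fun j => Lcoef qh u (f j) (s j) (t j)) ord0 ord_max.

Lemma Eop_expand x : E x = fmx_sum (fun f => fmx_scale (x ^+ Edeg f) (Ecoef f)).
Proof.
apply: fmxP => s t; rewrite Eop_prod.
have -> : (fun j => Lax Rt (x / w j) (s j) (t j)) = fun j =>
    fmx_sum (fun e : 'I_3 => fmx_scale ((x / w j) ^+ e) (Lcoef qh u e (s j) (t j))).
  by apply: functional_extensionality => j; rewrite Lax_Rmat_expand.
rewrite fmx_prod_sum /fmx_sum; apply: eq_bigr => f _.
rewrite fmx_prod_scale /fmx_scale /Ecoef mulrA; congr (_ * _).
by under eq_bigr do rewrite exprMn; rewrite big_split /= prodrXr.
Qed.

Lemma Edeg_top f : (2 * L <= Edeg f)%N -> forall j, nat_of_ord (f j) = 2%N.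
Proof.
move=> deg_ge j.
have deg_le : (Edeg f + \sum_(k < L) (2 - f k) = 2 * L)%N.
  rewrite /Edeg -big_split /= (eq_bigr (fun _ => 2%N)) => [|k _].
    by rewrite big_const_ord iter_addn_0 mulnC.
  by rewrite subnKC // -ltnS ltn_ord.
move: deg_le; rewrite (bigD1 j) //= => deg_le.
have := ltn_ord (f j); lia.
Qed.

Lemma Ecoef_top (f : {ffun 'I_L -> 'I_3}) :
  (forall j, nat_of_ord (f j) = 2%N) -> Ecoef f = fmx0.
Proof.
move=> f2; apply: fmxP => s t; rewrite /Ecoef /fmx0.
rewrite (fmx_lower_prod (A := fun j => Lcoef qh u (f j) (s j) (t j))) ?mulr0 // => j.
by rewrite f2; apply/Lcoef2_lower/two_neq0.
Qed.

Definition Epoly s t : {poly C} := \sum_f Ecoef f s t *: 'X^(Edeg f).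

Lemma Eop_horner x s t : E x s t = (Epoly s t).[x].
Proof.
rewrite Eop_expand /fmx_sum /fmx_scale /Epoly horner_sum; apply: eq_bigr => f _.
by rewrite hornerZ hornerXn mulrC.
Qed.

Lemma Eop_comm x y : y != 0 -> fmx_mul (E x) (E y) = fmx_mul (E y) (E x).
Proof.
move=> y_neq0; apply: fmxP => s t; apply/eqP; rewrite -subr_eq0; apply/eqP.
pose comm := \sum_r (Epoly s r * (E y r t)%:P - (E y s r)%:P * Epoly r t).
have commE x' : comm.[x'] = fmx_mul (E x') (E y) s t - fmx_mul (E y) (E x') s t.
  rewrite /comm horner_sum /fmx_mul -sumrB; apply: eq_bigr => r _.
  by rewrite !hornerE !Eop_horner.
pose apoly := ('X - (zeta * y)%:P) * ('X - (q ^+ 2 * y)%:P).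
have : apoly * comm = 0.
  apply: poly_eq0_horner => // x'.
  rewrite /apoly !hornerM commE !hornerXsubC.
  have -> : (x' - zeta * y) * (x' - q ^+ 2 * y) = y ^+ 2 * Ra q zeta (x' / y).
    by rewrite /Ra; field.
  by rewrite -mulrA mulrBr Ra_Eop_comm // [Ra _ _ _ * _]mulrC subrr mulr0.
move/eqP; rewrite mulf_eq0 => /orP[|/eqP comm0].
  by rewrite /apoly mulf_eq0 !polyXsubC_eq0.
by rewrite -commE comm0 horner0.
Qed.

Definition PFcoef (k : {ffun 'I_L -> {ffun 'I_L -> 'I_3}}) : C :=
  fmx_prod (fun i => Ecoef (k i)) (dvac L) (vac L).

Definition PFmpoly : {mpoly C[L]} :=
  \sum_k PFcoef k *: 'X_[[multinom Edeg (k (rev_ord i)) | i < L]].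

Lemma PF_meval x : PF q qh zeta w x = PFmpoly.@[x].
Proof.
rewrite /PF -/(fmx_prod _).
have -> : (fun i => E (x (rev_ord i))) =
    fun i => fmx_sum (fun f => fmx_scale (x (rev_ord i) ^+ Edeg f) (Ecoef f)).
  by apply: functional_extensionality => i; rewrite Eop_expand.
rewrite fmx_prod_sum /fmx_sum /PFmpoly raddf_sum; apply: eq_bigr => k _ /=.
rewrite fmx_prod_scale /fmx_scale mevalZ mevalX mulrC; congr (_ * _).
rewrite (reindex_inj rev_ord_inj) /=; apply: eq_bigr => i _.
by rewrite mnmE rev_ordK.
Qed.

Lemma PFmpoly_deg m i : m \in msupp PFmpoly -> (m i <= 2 * L - 1)%N.
Proof.
rewrite mcoeff_msupp; apply: contraNT; rewrite -ltnNge => deg_gt.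
rewrite raddf_sum big1 // => k _ /=; rewrite mcoeffZ mcoeffX.
have [mk|] := eqVneq [multinom Edeg (k (rev_ord i)) | i < L] m; last by rewrite mulr0.
have deg_top : (2 * L <= Edeg (k (rev_ord i)))%N.
  by move: deg_gt; rewrite -mk mnmE; lia.
by rewrite /PFcoef (fmx_prod_eq0 (i := rev_ord i)) ?mul0r //; apply/Ecoef_top/Edeg_top.
Qed.

Lemma PF_perm (s : 'S_L) x : (forall i, x i != 0) ->
  PF q qh zeta w (fun i => x (s i)) = PF q qh zeta w x.
Proof.
move=> x_neq0; rewrite /PF; congr (_ (dvac L) (vac L)).
rewrite -(big_map (fun i => s (rev_ord i)) predT (fun j => E (x j))).
rewrite -(big_map (@rev_ord L) predT (fun j => E (x j))).
apply: perm_big_comm; first exact: fmx_mulA.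
  by move=> i j; apply: Eop_comm.
apply: perm_trans (perm_map_index_enum (inj_comp (@perm_inj _ s) (@rev_ord_inj L))) _.
by rewrite perm_sym; apply: perm_map_index_enum; apply: rev_ord_inj.
Qed.

End Model.

Theorem lemma2p1 (C : numClosedFieldType) (q qh zeta : C) (L : nat)
    (w : 'I_L -> C) :
  q != 0 -> qh ^+ 2 = q -> (zeta = q \/ zeta = - q ^+ 3) ->
  (0 < L)%N -> (forall j, w j != 0) ->
  (exists P : {mpoly C[L]},
     (forall x : 'I_L -> C, (forall i, x i != 0) ->
        PF q qh zeta w x = P.@[x]) /\
     (forall m, m \in msupp P -> forall i : 'I_L, (m i <= 2 * L - 1)%N)) /\
  (forall (s : 'S_L) (x : 'I_L -> C), (forall i, x i != 0) ->
     PF q qh zeta w (fun i => x (s i)) = PF q qh zeta w x).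
Proof.
move=> q_neq0 qhq zeta_cases _ _.
have qh_neq0 : qh != 0 by apply: contra_neq q_neq0 => qh0; rewrite -qhq qh0 expr0n.
have C_char0 := pchar_num C.
split; last by move=> s x x_neq0; apply: PF_perm.
exists (PFmpoly q qh zeta w); split => [x _|]; first exact: PF_meval.
by move=> m m_supp i; move: m_supp; apply: PFmpoly_deg.
Qed.
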